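(* Let $f,g\in\mathbb B(X)$ with $f$ modular in $g$, let $\mathbf u$ be an assignment over $X$ and $x\in\mathrm{dep}(g)$. Then $$\mathrm{mscs}^{\mathbf u}_x(f)=\mathrm{mscs}^{\mathbf u}_x(g)+\mathrm{mscs}^{\mathbf u}_g(f).$$
   Context: $X$ is a fixed finite set of variables; $\mathbb B(X)$ is the set of Boolean functions $\{0,1\}^X\to\{0,1\}$. For $\mathbf u\in\{0,1\}^X$ and $S\subseteq X$, $\mathbf u^{\oplus S}$ flips the values of the variables in $S$. $f_{x/c}$ is $f$ with $x$ fixed to $c$; $\mathrm{dep}(f)=\{x:f_{x/1}\ne f_{x/0}\}$; $f[x/s]=sf_{x/1}\lor\overline sf_{x/0}$; $\mathrm D_xf=f_{x/1}\oplus f_{x/0}$. Modularity: $f$ is modular in $g$ if $g$ is not constant and there are $\ell\in\mathbb B(X)$, $z\in X$ with $\mathrm{dep}(\ell)\cap\mathrm{dep}(g)=\emptyset$ and $f=\ell[z/g]$; then $f_{g/1}:=\ell_{z/1}$, $f_{g/0}:=\ell_{z/0}$ (well defined) and $\mathrm D_gf:=f_{g/1}\oplus f_{g/0}$. $\mathrm{mscs}^{\mathbf u}_x(f)$ is the minimum of $|S|$ over $S\subseteq X\setminus\{x\}$ with $(\mathrm D_xf)(\mathbf u^{\oplus S})=1$ (equivalently $f(\mathbf u^{\oplus S})\ne f(\mathbf u^{\oplus(S\cup\{x\})})$), and $\mathrm{mscs}^{\mathbf u}_g(f)$ is the minimum of $|S|$ over $S\subseteq X$ with $(\mathrm D_gf)(\mathbf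 u^{\oplus S})=1$; each is $\infty$ if no such set exists (with $\infty+k=\infty$). *)

From mathcomp Require Import all_boot.
Set Implicit Arguments. Unset Strict Implicit. Unset Printing Implicit Defensive.

Section BoolFun.
Variable X : finType.

Definition assignment := {ffun X -> bool}.
Definition boolfun := assignment -> bool.

Definition flip (u : assignment) (S : {set X}) : assignment :=
  [ffun y => if y \in S then ~~ u y else u y].

Definition setvar (u : assignment) (x : X) (c : bool) : assignment :=
  [ffun y => if y == x then c else u y].

Definition restr (f : boolfun) (x : X) (c : bool) : boolfun :=
  fun u => f (setvar u x c).

Definition dep (f : boolfun) : {set X} :=
  [set x | [exists u : assignment, restr f x true u != restr f x false u]].

Definition subst (f : boolfun) (x : X) (s : boolfun) : boolfun :=
  fun u => (s u && restr f x true u) || (~~ s u && restr f x false u).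

Definition deriv (f : boolfun) (x : X) : boolfun :=
  fun u => restr f x true u (+) restr f x false u.

Definition nonconstant (g : boolfun) : Prop := exists u v, g u != g v.

Definition modular_via (f g l : boolfun) (z : X) : Prop :=
  nonconstant g /\ [disjoint dep l & dep g] /\ f = subst l z g.

Definition modular (f g : boolfun) : Prop := exists l z, modular_via f g l z.

(* f_{g/c} := l_{z/c},  D_g f := f_{g/1} xor f_{g/0}, relative to the witness (l, z) *)
Definition restr_mod (l : boolfun) (z : X) (c : bool) : boolfun := restr l z c.
Definition deriv_mod (l : boolfun) (z : X) : boolfun :=
  fun u => restr_mod l z true u (+) restr_mod l z false u.

(* minimum of |S| over S satisfying P, None standing for infinity *)
Definition minsize (P : pred {set X}) : option nat :=
  if [exists S : {set X}, P S] then Some (\big[minn/#|X|]_(S : {set X} | P S) #|S|)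
  else None.

Definition oadd (a b : option nat) : option nat :=
  match a, b with Some m, Some n => Some (m + n) | _, _ => None end.

Definition mscs_var (u : assignment) (x : X) (f : boolfun) : option nat :=
  minsize (fun S => (x \notin S) && deriv f x (flip u S)).

(* mscs^u_g(f), where (l,z) witnesses modularity of f in g *)
Definition mscs_mod (u : assignment) (l : boolfun) (z : X) : option nat :=
  minsize (fun S => deriv_mod l z (flip u S)).

End BoolFun.

From mathcomp Require Import all_boot.
Set Implicit Arguments. Unset Strict Implicit. Unset Printing Implicit Defensive.

(* 1. Minimum sizes: if the sets satisfying Pf are, up to size, exactly the
      disjoint unions of a set satisfying Pg and a set satisfying Pm, then
      minsize Pf = minsize Pg + minsize Pm (with infinity) -- [minsize_add].
   2. Locality: a Boolean function, its restrictions and its derivatives only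
      read the variables of its dependency set -- [eq_on_dep] and corollaries.
   3. Chain rule: since x is not in dep(l), D_x (l[z/g]) = D_x g /\ D_g f
      -- [deriv_subst].
   4. A critical set S for x in f splits, by locality and the chain rule,
      into S /\ dep(g) (critical for x in g) and S /\ dep(l) (critical for g
      in f), which are disjoint; conversely two such sets merge after being
      cut down to dep(g) and dep(l).  Step 1 then gives the theorem. *)

Section MinSize.
Variable X : finType.

Lemma bigmin_le (I : eqType) (r : seq I) (P : pred I) (F : I -> nat) m i :
  i \in r -> P i -> \big[minn/m]_(j <- r | P j) F j <= F i.
Proof.
elim: r => [//|a r IHr]; rewrite inE big_cons => /orP[/eqP<- -> | ir Pi].
  exact: geq_minl.
by case: ifP => _; [apply: leq_trans (geq_minr _ _) (IHr ir Pi) | apply: IHr].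
Qed.

Lemma minsize_attained (P : pred {set X}) S1 : P S1 ->
  exists S0, [/\ P S0, minsize P = Some #|S0| & forall S, P S -> #|S0| <= #|S|].
Proof.
move=> PS1; case: (arg_minnP (fun S : {set X} => #|S|) PS1) => S0 PS0 minS0.
exists S0; split => //; rewrite /minsize.
have -> : [exists S, P S] by apply/existsP; exists S0.
congr Some; apply/eqP; rewrite eqn_leq; apply/andP; split.
  by apply: bigmin_le; rewrite ?mem_index_enum.
apply: (big_ind (fun v => #|S0| <= v)) => [||S PS]; first exact: max_card.
  by move=> a b Ha Hb; rewrite leq_min Ha Hb.
exact: minS0.
Qed.

Lemma minsize_none (P : pred {set X}) : (forall S, ~~ P S) -> minsize P = None.
Proof.
by move=> nP; rewrite /minsize; case: existsP => // [[S PS]]; move: (nP S); rewrite PS.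
Qed.

Lemma minsize_add (Pf Pg Pm : pred {set X}) :
  (forall S, Pf S -> exists S1 S2, [/\ Pg S1, Pm S2 & #|S1| + #|S2| <= #|S|]) ->
  (forall S1 S2, Pg S1 -> Pm S2 -> exists S, Pf S /\ #|S| <= #|S1| + #|S2|) ->
  minsize Pf = oadd (minsize Pg) (minsize Pm).
Proof.
move=> split merge.
case: (boolP [exists S, Pf S]) => [/existsP[S PS]|/existsPn noPf].
  have [S0 [PS0 -> min0]] := minsize_attained PS.
  have [S1 [S2 [P1 P2 le12]]] := split _ PS0.
  have [T1 [PT1 -> min1]] := minsize_attained P1.
  have [T2 [PT2 -> min2]] := minsize_attained P2.
  have [S' [PS' leS']] := merge _ _ PT1 PT2.
  congr Some; apply/eqP; rewrite eqn_leq (leq_trans (min0 _ PS') leS') /=.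
  exact: leq_trans (leq_add (min1 _ P1) (min2 _ P2)) le12.
rewrite minsize_none //.
case: (boolP [exists S, Pg S]) => [/existsP[S1 P1]|/existsPn noPg].
  case: (boolP [exists S, Pm S]) => [/existsP[S2 P2]|/existsPn noPm].
    by have [S [PS _]] := merge _ _ P1 P2; move: (noPf S); rewrite PS.
  by rewrite (minsize_none noPm); case: (minsize Pg).
by rewrite (minsize_none noPg).
Qed.

End MinSize.

Section Locality.
Variable X : finType.
Implicit Types (h : boolfun X) (t v w : assignment X).

Lemma setvar_id t y : setvar t y (t y) = t.
Proof. by apply/ffunP => s; rewrite ffunE; case: eqP => // ->. Qed.

Lemma setvar_nondep h y b t : y \notin dep h -> h (setvar t y b) = h t.
Proof.
move=> ynd; have Eb : h (setvar t y true) = h (setvar t y false).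
  by apply/eqP; apply: contraNT ynd => ne; rewrite inE; apply/existsP; exists t.
by rewrite -{2}(setvar_id t y); case: b (t y) => -[].
Qed.

(* h only reads the variables of dep(h): induction on the number of
   variables where the two assignments differ. *)
Lemma eq_on_dep h v w : (forall y, y \in dep h -> v y = w y) -> h v = h w.
Proof.
move Hn: #|[set y | v y != w y]| => n; elim: n v Hn => [|n IH] v Hn agr.
  congr h; apply/ffunP => y; apply/eqP; apply: contraT => ne.
  by move/eqP: Hn; rewrite cards_eq0 => /eqP/setP/(_ y); rewrite !inE ne.
have [y] : exists y, y \in [set y | v y != w y].
  by apply/set0Pn; rewrite -card_gt0 Hn.
rewrite inE => ne; have ynd : y \notin dep h by apply: contra ne => /agr ->.
rewrite -(setvar_nondep (w y) v ynd); apply: IH => [|s sd]; last first.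
  by rewrite ffunE; case: eqP => [->|_] //; apply: agr.
have -> : [set s | setvar v y (w y) s != w s] = [set s | v s != w s] :\ y.
  by apply/setP => s; rewrite !inE /setvar ffunE; case: (s =P y) => [->|]; rewrite ?eqxx.
by apply/eq_add_S; rewrite -Hn (cardsD1 y [set s | v s != w s]) inE ne.
Qed.

Lemma restr_eq_on_dep h y c v w :
  (forall s, s \in dep h -> v s = w s) -> restr h y c v = restr h y c w.
Proof.
by move=> agr; apply: (@eq_on_dep h) => s sd; rewrite !ffunE; case: eqP => // _; apply: agr.
Qed.

Lemma deriv_eq_on_dep h y v w :
  (forall s, s \in dep h -> v s = w s) -> deriv h y v = deriv h y w.
Proof. by move=> agr; rewrite /deriv !(restr_eq_on_dep _ _ agr). Qed.

Lemma deriv_mod_eq_on_dep h z v w :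
  (forall s, s \in dep h -> v s = w s) -> deriv_mod h z v = deriv_mod h z w.
Proof. by move=> agr; rewrite /deriv_mod /restr_mod !(restr_eq_on_dep _ _ agr). Qed.

Lemma flip_eq_on (u : assignment X) (S T D : {set X}) :
  (forall y, y \in D -> (y \in S) = (y \in T)) ->
  forall y, y \in D -> flip u S y = flip u T y.
Proof. by move=> ST y yD; rewrite !ffunE ST. Qed.

Lemma restr_setvar_nondep l z c x b w :
  x \notin dep l -> restr l z c (setvar w x b) = restr l z c w.
Proof.
move=> xl; apply: restr_eq_on_dep => s sl; rewrite ffunE.
by case: eqP => // sx; move: xl; rewrite -sx sl.
Qed.

Lemma deriv_subst l z g x v : x \notin dep l ->
  deriv (subst l z g) x v = deriv g x v && deriv_mod l z v.
Proof.
move=> xl; rewrite /deriv /deriv_mod /restr_mod.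
rewrite {1 2}/restr /subst !restr_setvar_nondep // -!/(restr g x _ _).
by case: (restr g x true v); case: (restr g x false v);
   case: (restr l z true v); case: (restr l z false v).
Qed.

End Locality.

Section Modular.
Variables (X : finType) (g l : boolfun X) (z x : X) (u : assignment X).
Hypotheses (dis : [disjoint dep l & dep g]) (xg : x \in dep g).

Let xl : x \notin dep l. Proof. by rewrite (disjointFl dis xg). Qed.

Lemma critical_split (S : {set X}) :
  (x \notin S) && deriv (subst l z g) x (flip u S) ->
  exists S1 S2 : {set X}, [/\ (x \notin S1) && deriv g x (flip u S1),
    deriv_mod l z (flip u S2) & #|S1| + #|S2| <= #|S|].
Proof.
case/andP=> xS; rewrite deriv_subst // => /andP[dg dm].
have agree (D : {set X}) : forall y, y \in D -> flip u (S :&: D) y = flip u S y.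
  by apply: flip_eq_on => y yD; rewrite in_setI yD andbT.
exists (S :&: dep g), (S :&: dep l); split.
- by rewrite in_setI negb_and xS (deriv_eq_on_dep _ (agree _)).
- by rewrite (deriv_mod_eq_on_dep _ (agree _)).
have disS : [disjoint S :&: dep g & S :&: dep l].
  by rewrite disjoint_sym; apply: disjointWl (subsetIr _ _) (disjointWr (subsetIr _ _) dis).
rewrite -cardsUI (disjoint_setI0 disS) cards0 addn0 subset_leq_card //.
by rewrite -setIUr subsetIl.
Qed.

Lemma critical_merge (S1 S2 : {set X}) :
  (x \notin S1) && deriv g x (flip u S1) -> deriv_mod l z (flip u S2) ->
  exists S : {set X}, ((x \notin S) && deriv (subst l z g) x (flip u S))
            /\ #|S| <= #|S1| + #|S2|.
Proof.
move=> /andP[xS1 d1] d2; set S := (S1 :&: dep g) :|: (S2 :&: dep l).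
have agree_g : forall y, y \in dep g -> flip u S y = flip u S1 y.
  apply: flip_eq_on => y yD; rewrite in_setU !in_setI yD (disjointFl dis yD).
  by rewrite andbF andbT orbF.
have agree_l : forall y, y \in dep l -> flip u S y = flip u S2 y.
  by apply: flip_eq_on => y yD; rewrite in_setU !in_setI yD (disjointFr dis yD) andbF andbT.
exists S; split.
  rewrite in_setU !in_setI (negbTE xS1) (negbTE xl) !andbF /= deriv_subst //.
  by rewrite (deriv_eq_on_dep _ agree_g) (deriv_mod_eq_on_dep _ agree_l) d1 d2.
apply: leq_trans (leq_card_setU _ _) _.
by apply: leq_add; apply: subset_leq_card; apply: subsetIl.
Qed.

End Modular.

Theorem mainTheorem19 (X : finType) (f g l : boolfun X) (z : X)
    (u : assignment X) (x : X) :
  modular_via f g l z ->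
  x \in dep g ->
  mscs_var u x f = oadd (mscs_var u x g) (mscs_mod u l z).
Proof.
move=> [_ [dis ->]] xg; apply: minsize_add.
- exact: critical_split.
- exact: critical_merge.
Qed.
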